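(* Let $F$ be the semigroup freely generated by four idempotent elements $x_{00},x_{01},x_{10},x_{11}$ (i.e. $\langle x_{00},x_{01},x_{10},x_{11}\mid x_{ij}^2=x_{ij}\rangle$ in semigroups), and $G$ the semigroup freely generated by three idempotents $x_\lambda,x_\mu,x_\rho$. Let $h_1,h_2,h_3:F\to G$ be the homomorphisms given by $h_1:(x_{00},x_{01},x_{10},x_{11})\mapsto(x_\lambda,x_\mu,x_\rho,x_\rho)$, $h_2:(x_{00},x_{01},x_{10},x_{11})\mapsto(x_\lambda,x_\lambda,x_\mu,x_\rho)$, $h_3:(x_{00},x_{01},x_{10},x_{11})\mapsto(x_\lambda,x_\mu,x_\mu,x_\rho)$, and let $|R|\subseteq F$ be the subsemigroup of elements on which $h_1,h_2,h_3$ all agree. For $i\in\omega$ put $p_i=(x_{00}x_{01})^{i+1}(x_{10}x_{01})^i(x_{10}x_{11})^{i+1}$ and $q_i=(x_{11}x_{10})^{i+1}(x_{01}x_{10})^i(x_{01}x_{00})^{i+1}$ (where a zeroth power means the factor is omitted). Then $|R|$ is generated by $x_{00},x_{11},p_i,q_i$ ($i\in\omega$) and has the presentation $$\langle x_{00},x_{11},p_i,q_i\ (i\in\omega)\mid x_{00}^2=x_{00},\ x_{11}^2=x_{11},\ x_{00}p_i=p_i=p_ix_{11},\ x_{11}q_i=q_i=q_ix_{00}\rangle.$$ It has a normal form consisting of all nonempty words in these generators containing no subword $x_{00}^2$, $x_{11}^2$, $x_{00}p_i$, $p_ix_{11}$, $x_{11}q_i$, or $q_ix_{00}$.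
   Context: Semigroups are sets with an associative binary operation (no identity element assumed). *)

From Stdlib Require Import List Relations.
Import ListNotations.

Inductive step {A : Type} (rule : list A -> list A -> Prop) : list A -> list A -> Prop :=
| step_intro : forall l r a b, rule a b -> step rule (l ++ a ++ r) (l ++ b ++ r).

Definition cong {A : Type} (rule : list A -> list A -> Prop) : list A -> list A -> Prop :=
  clos_refl_sym_trans (list A) (step rule).

Inductive idem_rule {A : Type} : list A -> list A -> Prop :=
| idem_intro : forall x : A, idem_rule [x; x] [x].

Inductive X4 := x00 | x01 | x10 | x11.
Inductive X3 := xl | xm | xr.

(** Equality in F = <x00,x01,x10,x11 | x_ij^2 = x_ij> and in
    G = <xl,xm,xr | x^2 = x>; elements are nonempty words. *)
Definition eqF : list X4 -> list X4 -> Prop := cong (@idem_rule X4).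
Definition eqG : list X3 -> list X3 -> Prop := cong (@idem_rule X3).

Definition h1 (x : X4) : X3 := match x with x00 => xl | x01 => xm | x10 => xr | x11 => xr end.
Definition h2 (x : X4) : X3 := match x with x00 => xl | x01 => xl | x10 => xm | x11 => xr end.
Definition h3 (x : X4) : X3 := match x with x00 => xl | x01 => xm | x10 => xm | x11 => xr end.

Definition inR (w : list X4) : Prop :=
  w <> [] /\ eqG (map h1 w) (map h2 w) /\ eqG (map h2 w) (map h3 w).

(** w^n as a word (w^0 = empty, i.e. factor omitted). *)
Definition pw {A : Type} (n : nat) (w : list A) : list A := concat (repeat w n).

Definition p_word (i : nat) : list X4 :=
  pw (S i) [x00; x01] ++ pw i [x10; x01] ++ pw (S i) [x10; x11].
Definition q_word (i : nat) : list X4 :=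
  pw (S i) [x11; x10] ++ pw i [x01; x10] ++ pw (S i) [x01; x00].

Inductive RGen := gx00 | gx11 | gp (i : nat) | gq (i : nat).

Definition ev (g : RGen) : list X4 :=
  match g with
  | gx00 => [x00] | gx11 => [x11] | gp i => p_word i | gq i => q_word i
  end.

Definition evw (u : list RGen) : list X4 := concat (map ev u).

Inductive R_rule : list RGen -> list RGen -> Prop :=
| R_x00 : R_rule [gx00; gx00] [gx00]
| R_x11 : R_rule [gx11; gx11] [gx11]
| R_p_l : forall i, R_rule [gx00; gp i] [gp i]
| R_p_r : forall i, R_rule [gp i; gx11] [gp i]
| R_q_l : forall i, R_rule [gx11; gq i] [gq i]
| R_q_r : forall i, R_rule [gq i; gx00] [gq i].

Definition eqR : list RGen -> list RGen -> Prop := cong R_rule.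

Definition forbidden (m : list RGen) : Prop := exists b, R_rule m b.

Definition reduced (u : list RGen) : Prop :=
  u <> [] /\ ~ (exists l m r, u = l ++ m ++ r /\ forbidden m).

From Stdlib Require Import List Relations Lia Classical.
Import ListNotations.

(** The word problem of a semigroup freely generated by idempotents is solved
    by [squash], which collapses runs of equal adjacent letters: two words are
    equal iff their squashes coincide.  Everything else is read off squashed
    words.

    1. Generators lie in |R|: h1, h2, h3 all send p_i to the same element
       (xl xm)^(i+1) (xr xm)^i xr; q_i follows by the symmetry [sig4], which
       swaps x00/x11 and x01/x10 and exchanges the roles of h1 and h2.
    2. Generation: a squashed word on which the images agree starts with x00
       or x11, and a letter-by-letter analysis of the images ([phase_head],
       [phase_middle], [phase_tail]) shows that it begins with x00 or with some
       p_n, followed by a shorter agreeing word.  Induction on the length then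
       writes every element of |R| as a product of generators.
    3. Normal form: rewriting with the relations shortens words, so every word
       has a reduced form; conversely, reduced words have distinct squashed
       images in F, since the first generator can be read off the image and
       consecutive generators overlap in at most one, recoverable, letter.
    The presentation follows: relations hold in F, and words equal in F have
    equal reduced forms. *)

Arguments pw : simpl never.

Section Congruence.
Context {A : Type} (rule : list A -> list A -> Prop).

Lemma cong_ctx X Y l r : cong rule X Y -> cong rule (l ++ X ++ r) (l ++ Y ++ r).
Proof.
  induction 1 as [X Y [l' r' a b Hab] | X | X Y _ IH | X Y Z _ IH1 _ IH2].
  - apply rst_step.
    replace (l ++ (l' ++ a ++ r') ++ r) with ((l ++ l') ++ a ++ (r' ++ r))
      by (rewrite !app_assoc; reflexivity).
    replace (l ++ (l' ++ b ++ r') ++ r) with ((l ++ l') ++ b ++ (r' ++ r))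
      by (rewrite !app_assoc; reflexivity).
    now constructor.
  - apply rst_refl.
  - now apply rst_sym.
  - now apply rst_trans with (l ++ Y ++ r).
Qed.

Lemma cong_app X X' Y Y' : cong rule X X' -> cong rule Y Y' -> cong rule (X ++ Y) (X' ++ Y').
Proof.
  intros HX HY. apply rst_trans with (X' ++ Y).
  - exact (cong_ctx X X' [] Y HX).
  - pose proof (cong_ctx Y Y' X' [] HY) as H. now rewrite !app_nil_r in H.
Qed.

Lemma cong_cons x X Y : cong rule X Y -> cong rule (x :: X) (x :: Y).
Proof. intro H. pose proof (cong_ctx X Y [x] [] H) as H'. now rewrite !app_nil_r in H'. Qed.

End Congruence.

Section Squash.
Context {A : Type} (dec : forall x y : A, {x = y} + {x <> y}).

Definition drop_lead (x : A) (l : list A) : list A :=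
  match l with
  | y :: l' => if dec y x then l' else l
  | [] => []
  end.

Fixpoint squash (l : list A) : list A :=
  match l with
  | [] => []
  | x :: l' => x :: drop_lead x (squash l')
  end.

Fixpoint squashed (l : list A) : Prop :=
  match l with
  | x :: ((y :: _) as l') => x <> y /\ squashed l'
  | _ => True
  end.

Lemma squash_not_nil l : l <> [] -> squash l <> [].
Proof. destruct l; [congruence | discriminate]. Qed.

Lemma squash_squashed l : squashed (squash l).
Proof.
  induction l as [|x l IH]; [exact I|]. cbn [squash].
  destruct (squash l) as [|y D]; [exact I|]. cbn [drop_lead].
  destruct (dec y x) as [->|Hyx]; [exact IH|]. split; [congruence | exact IH].
Qed.

Lemma squashed_squash_id l : squashed l -> squash l = l.
Proof.
  induction l as [|x l IH]; intro Hl; [reflexivity|]. cbn [squash].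
  destruct l as [|y l]; [reflexivity|]. destruct Hl as [Hxy Hl].
  rewrite IH by exact Hl. cbn [drop_lead]. destruct (dec y x); congruence.
Qed.

Lemma drop_lead_app x D E : D <> [] -> drop_lead x (D ++ E) = drop_lead x D ++ E.
Proof. destruct D as [|y D]; [congruence|]. intros _. cbn. destruct (dec y x); reflexivity. Qed.

Lemma squash_app_cons L z M :
  squash (L ++ z :: M) = squash (L ++ [z]) ++ drop_lead z (squash M).
Proof.
  induction L as [|x L IH]; [reflexivity|]. cbn [app squash].
  rewrite IH, drop_lead_app; [reflexivity|]. apply squash_not_nil. destruct L; discriminate.
Qed.

Lemma squash_dup l x r : squash (l ++ x :: x :: r) = squash (l ++ x :: r).
Proof.
  induction l as [|y l IH]; cbn [app squash].
  - cbn [drop_lead]. destruct (dec x x); [reflexivity | congruence].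
  - now rewrite IH.
Qed.

Lemma cong_squash L : cong idem_rule L (squash L).
Proof.
  induction L as [|x L IH]; [apply rst_refl|]. cbn [squash].
  apply rst_trans with (x :: squash L); [now apply cong_cons|].
  destruct (squash L) as [|y D]; [apply rst_refl|]. cbn [drop_lead].
  destruct (dec y x) as [->|_]; [|apply rst_refl].
  apply rst_step. exact (step_intro _ [] D [x; x] [x] (idem_intro x)).
Qed.

Theorem idem_cong_iff X Y : cong idem_rule X Y <-> squash X = squash Y.
Proof.
  split.
  - induction 1 as [X Y [l r a b [x]] | | |]; [apply squash_dup | reflexivity | congruence | congruence].
  - intro E. apply rst_trans with (squash X); [apply cong_squash|].
    rewrite E. apply rst_sym, cong_squash.
Qed.

Lemma squashed_app L x M : squashed (L ++ x :: M) <-> squashed (L ++ [x]) /\ squashed (x :: M).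
Proof.
  induction L as [|y L IH]; [simpl; tauto|].
  destruct L as [|z L]; simpl; [tauto|]. simpl in IH. rewrite IH. tauto.
Qed.

Lemma squashed_suffix L M : squashed (L ++ M) -> squashed M.
Proof.
  induction L as [|x L IH]; simpl; [tauto|]. intro H. apply IH.
  destruct (L ++ M); [exact I | exact (proj2 H)].
Qed.

End Squash.

Section SquashMap.
Context {A B : Type} (decA : forall x y : A, {x = y} + {x <> y})
  (decB : forall x y : B, {x = y} + {x <> y}) (f : A -> B).

Lemma cong_idem_map X Y : cong idem_rule X Y -> cong idem_rule (map f X) (map f Y).
Proof.
  induction 1 as [X Y [l r a b [x]] | | |].
  - apply rst_step. rewrite !map_app. exact (step_intro _ _ _ _ _ (idem_intro (f x))).
  - apply rst_refl.
  - now apply rst_sym.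
  - eapply rst_trans; eauto.
Qed.

Hypothesis f_inj : forall x y, f x = f y -> x = y.

Lemma squash_map L : squash decB (map f L) = map f (squash decA L).
Proof.
  induction L as [|x L IH]; [reflexivity|]. cbn [map squash]. rewrite IH. f_equal.
  destruct (squash decA L) as [|y D]; [reflexivity|]. cbn [map drop_lead].
  destruct (decB (f y) (f x)) as [E|Hf], (decA y x) as [Eyx|Hyx]; try reflexivity.
  - apply f_inj in E. contradiction.
  - congruence.
Qed.

Lemma squashed_map L : squashed (map f L) <-> squashed L.
Proof.
  induction L as [|x L IH]; [reflexivity|]. destruct L as [|y L]; [reflexivity|].
  change (f x <> f y /\ squashed (map f (y :: L)) <-> x <> y /\ squashed (y :: L)).
  rewrite IH. split; intros [Hxy H]; split; auto. intro E; apply Hxy; congruence.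
Qed.

End SquashMap.

Definition X3_dec (x y : X3) : {x = y} + {x <> y}.
Proof. destruct x, y; (left; reflexivity) || (right; discriminate). Defined.

Definition X4_dec (x y : X4) : {x = y} + {x <> y}.
Proof. destruct x, y; (left; reflexivity) || (right; discriminate). Defined.

Notation sq3 := (squash X3_dec).
Notation sq4 := (squash X4_dec).

Lemma eqG_iff X Y : eqG X Y <-> sq3 X = sq3 Y.
Proof. apply idem_cong_iff. Qed.

Lemma eqF_iff X Y : eqF X Y <-> sq4 X = sq4 Y.
Proof. apply idem_cong_iff. Qed.

Lemma sq4_app_squash X Y : sq4 (X ++ sq4 Y) = sq4 (X ++ Y).
Proof. apply eqF_iff, cong_app; [apply rst_refl | apply rst_sym, cong_squash]. Qed.

Lemma pw_0 {A} (w : list A) : pw 0 w = [].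
Proof. reflexivity. Qed.

Lemma pw_S {A} n (w : list A) : pw (S n) w = w ++ pw n w.
Proof. reflexivity. Qed.

Lemma pw_Sr {A} n (w : list A) : pw (S n) w = pw n w ++ w.
Proof.
  induction n as [|n IH]; [apply app_nil_r|].
  rewrite (pw_S (S n)), IH, app_assoc, <- IH. reflexivity.
Qed.

Lemma pw_swap {A} n (x y : A) T : pw n [x; y] ++ x :: T = x :: pw n [y; x] ++ T.
Proof. induction n as [|n IH]; [reflexivity|]. rewrite !pw_S. simpl. now rewrite IH. Qed.

Lemma map_pw {A B} (f : A -> B) n w : map f (pw n w) = pw n (map f w).
Proof. induction n as [|n IH]; [reflexivity|]. now rewrite !pw_S, map_app, IH. Qed.

Lemma squashed_alternating {A} (x y : A) n : x <> y -> squashed (x :: pw n [y; x]).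
Proof.
  intro Hxy. induction n as [|n IH]; [exact I|].
  rewrite pw_S. cbn [app]. repeat split; auto.
Qed.

Lemma p_word_eq k :
  p_word k = pw k [x00; x01] ++ x00 :: x01 :: x10 :: pw k [x01; x10] ++ x11 :: pw k [x10; x11].
Proof.
  unfold p_word. rewrite (pw_Sr k [x00; x01]), <- app_assoc. f_equal. cbn [app].
  do 2 f_equal. rewrite pw_S. cbn [app]. now rewrite pw_swap.
Qed.

Lemma p_head n : exists T, p_word n = x00 :: x01 :: T.
Proof. rewrite p_word_eq. destruct n; rewrite ?pw_S; cbn [app]; eexists; reflexivity. Qed.

Lemma p_last n : exists P, p_word n = P ++ [x11].
Proof.
  unfold p_word. rewrite (pw_Sr n [x10; x11]).
  exists (pw (S n) [x00; x01] ++ pw n [x10; x01] ++ pw n [x10; x11] ++ [x10]).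
  now rewrite <- !app_assoc.
Qed.

Lemma squashed_p n : squashed (p_word n).
Proof.
  rewrite p_word_eq. apply squashed_app. split.
  - rewrite pw_swap, app_nil_r. apply squashed_alternating. discriminate.
  - split; [discriminate|]. split; [discriminate|].
    change (squashed ((x10 :: pw n [x01; x10]) ++ x11 :: pw n [x10; x11])).
    apply squashed_app. split.
    + rewrite <- (app_nil_r (pw n [x01; x10])), <- pw_swap, <- app_assoc. cbn [app].
      apply squashed_app. split.
      * rewrite pw_swap, app_nil_r. apply squashed_alternating. discriminate.
      * split; [discriminate | exact I].
    + apply squashed_alternating. discriminate.
Qed.

Definition sig4 (x : X4) : X4 :=
  match x with x00 => x11 | x01 => x10 | x10 => x01 | x11 => x00 end.
Definition sig3 (x : X3) : X3 :=
  match x with xl => xr | xm => xm | xr => xl end.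

Lemma sig4_inj x y : sig4 x = sig4 y -> x = y.
Proof. destruct x, y; simpl; congruence. Qed.

Lemma sig3_inj x y : sig3 x = sig3 y -> x = y.
Proof. destruct x, y; simpl; congruence. Qed.

Lemma map_sig4_invol w : map sig4 (map sig4 w) = w.
Proof. induction w as [|[] w IH]; simpl; congruence. Qed.

Lemma map_sig3_invol w : map sig3 (map sig3 w) = w.
Proof. induction w as [|[] w IH]; simpl; congruence. Qed.

Lemma h1_sig w : map h1 (map sig4 w) = map sig3 (map h2 w).
Proof. induction w as [|[] w IH]; simpl; congruence. Qed.

Lemma h2_sig w : map h2 (map sig4 w) = map sig3 (map h1 w).
Proof. induction w as [|[] w IH]; simpl; congruence. Qed.

Lemma h3_sig w : map h3 (map sig4 w) = map sig3 (map h3 w).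
Proof. induction w as [|[] w IH]; simpl; congruence. Qed.

Lemma sq3_sig L : sq3 (map sig3 L) = map sig3 (sq3 L).
Proof. apply squash_map, sig3_inj. Qed.

Lemma sq4_sig L : sq4 (map sig4 L) = map sig4 (sq4 L).
Proof. apply squash_map, sig4_inj. Qed.

Lemma p_sig n : map sig4 (p_word n) = q_word n.
Proof. unfold p_word, q_word. now rewrite !map_app, !map_pw. Qed.

Lemma q_sig n : map sig4 (q_word n) = p_word n.
Proof. now rewrite <- p_sig, map_sig4_invol. Qed.

Lemma q_head n : exists T, q_word n = x11 :: x10 :: T.
Proof. destruct (p_head n) as [T E]. exists (map sig4 T). now rewrite <- p_sig, E. Qed.

Lemma q_last n : exists P, q_word n = P ++ [x00].
Proof. destruct (p_last n) as [P E]. exists (map sig4 P). now rewrite <- p_sig, E, map_app. Qed.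

Lemma squashed_q n : squashed (q_word n).
Proof. rewrite <- p_sig. apply squashed_map; [apply sig4_inj | apply squashed_p]. Qed.

Lemma idem_run {A} (x : A) i : cong idem_rule (x :: pw i [x; x]) [x].
Proof.
  induction i as [|i IH]; [apply rst_refl|].
  rewrite pw_S. apply rst_trans with (x :: pw i [x; x]); [|exact IH].
  apply rst_trans with (x :: x :: pw i [x; x]);
    apply rst_step; exact (step_intro _ [] _ [x; x] [x] (idem_intro x)).
Qed.

Lemma idem_run_S {A} (x : A) i : cong idem_rule (pw (S i) [x; x]) [x].
Proof.
  rewrite pw_S. apply rst_trans with [x; x].
  - apply cong_cons, idem_run.
  - apply rst_step. exact (step_intro _ [] [] [x; x] [x] (idem_intro x)).
Qed.

Definition p_image (i : nat) : list X3 := pw (S i) [xl; xm] ++ pw i [xr; xm] ++ [xr].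

Lemma p_image_h1 i : eqG (map h1 (p_word i)) (p_image i).
Proof.
  unfold p_word, p_image. rewrite !map_app, !map_pw. cbn [map h1].
  apply cong_app; [apply rst_refl|]. apply cong_app; [apply rst_refl | apply idem_run_S].
Qed.

Lemma p_image_h2 i : eqG (map h2 (p_word i)) (p_image i).
Proof.
  unfold p_word. rewrite !map_app, !map_pw. cbn [map h2].
  replace (p_image i) with ([xl] ++ pw i [xm; xl] ++ pw (S i) [xm; xr]).
  - apply cong_app; [apply idem_run_S | apply rst_refl].
  - unfold p_image. cbn [app]. rewrite <- pw_swap, (pw_Sr i [xl; xm]), <- app_assoc.
    f_equal. rewrite pw_S. cbn [app]. now rewrite pw_swap, app_nil_r.
Qed.

Lemma p_image_h3 i : eqG (map h3 (p_word i)) (p_image i).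
Proof.
  unfold p_word, p_image. rewrite !map_app, !map_pw. cbn [map h3].
  rewrite (pw_Sr i [xl; xm]), (pw_S i [xm; xr]).
  replace ((pw i [xl; xm] ++ [xl; xm]) ++ pw i [xm; xm] ++ [xm; xr] ++ pw i [xm; xr])
    with ((pw i [xl; xm] ++ [xl]) ++ ((xm :: pw i [xm; xm]) ++ [xm]) ++ (pw i [xr; xm] ++ [xr]))
    by (rewrite <- !app_assoc; cbn [app]; now rewrite (pw_swap i xr xm []), app_nil_r).
  replace ((pw i [xl; xm] ++ [xl; xm]) ++ pw i [xr; xm] ++ [xr])
    with ((pw i [xl; xm] ++ [xl]) ++ [xm] ++ (pw i [xr; xm] ++ [xr]))
    by (now rewrite <- !app_assoc).
  apply cong_app; [apply rst_refl|]. apply cong_app; [|apply rst_refl].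
  apply rst_trans with [xm; xm].
  - exact (cong_app _ _ _ [xm] [xm] (idem_run xm i) (rst_refl _ _ _)).
  - apply rst_step. exact (step_intro _ [] [] [xm; xm] [xm] (idem_intro xm)).
Qed.

Lemma inR_sig w : inR w -> inR (map sig4 w).
Proof.
  intros (Hne & H12 & H23). split; [|split].
  - destruct w; [congruence | discriminate].
  - rewrite h1_sig, h2_sig. apply cong_idem_map, rst_sym, H12.
  - rewrite h2_sig, h3_sig. apply cong_idem_map. now apply rst_trans with (map h2 w).
Qed.

Lemma p_in_R i : inR (p_word i).
Proof.
  split; [destruct (p_head i) as [T ->]; discriminate|]. split.
  - apply rst_trans with (p_image i); [apply p_image_h1 | apply rst_sym, p_image_h2].
  - apply rst_trans with (p_image i); [apply p_image_h2 | apply rst_sym, p_image_h3].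
Qed.

Theorem generators_in_R g : inR (ev g).
Proof.
  destruct g as [| |i|i].
  - split; [discriminate | split; apply rst_refl].
  - split; [discriminate | split; apply rst_refl].
  - apply p_in_R.
  - cbn [ev]. rewrite <- p_sig. apply inR_sig, p_in_R.
Qed.

Definition agrees (f g : X4 -> X3) (w : list X4) : Prop := sq3 (map f w) = sq3 (map g w).

(** Squashed words representing elements of |R| (the empty word included). *)
Definition agreeing (w : list X4) : Prop :=
  squashed w /\ agrees h1 h3 w /\ agrees h2 h3 w.

Lemma agrees_squash f g w : agrees f g (sq4 w) <-> agrees f g w.
Proof.
  unfold agrees.
  assert (Hf : forall k : X4 -> X3, sq3 (map k (sq4 w)) = sq3 (map k w))
    by (intro k; apply eqG_iff, cong_idem_map, rst_sym, cong_squash).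
  now rewrite !Hf.
Qed.

Lemma inR_agreeing w : inR w -> agreeing (sq4 w).
Proof.
  intros (_ & H12 & H23). apply eqG_iff in H12, H23.
  split; [apply squash_squashed|]. rewrite !agrees_squash. unfold agrees. split; congruence.
Qed.

Lemma agrees13_sig w : agrees h1 h3 (map sig4 w) <-> agrees h2 h3 w.
Proof.
  unfold agrees. rewrite h1_sig, h3_sig, !sq3_sig. split; intro H; [|now rewrite H].
  now rewrite <- (map_sig3_invol (sq3 (map h2 w))), H, map_sig3_invol.
Qed.

Lemma agrees23_sig w : agrees h2 h3 (map sig4 w) <-> agrees h1 h3 w.
Proof.
  unfold agrees. rewrite h2_sig, h3_sig, !sq3_sig. split; intro H; [|now rewrite H].
  now rewrite <- (map_sig3_invol (sq3 (map h1 w))), H, map_sig3_invol.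
Qed.

Lemma agreeing_sig w : agreeing w -> agreeing (map sig4 w).
Proof.
  intros (Hs & H13 & H23). split; [apply squashed_map; [apply sig4_inj | exact Hs]|].
  now rewrite agrees13_sig, agrees23_sig.
Qed.

Lemma agrees_drop_head f g a b x :
  f a = g a -> f b = g b -> f a <> f b -> agrees f g (a :: b :: x) -> agrees f g (b :: x).
Proof.
  unfold agrees. cbn [map squash drop_lead]. intros Ea Eb Nab H.
  rewrite Ea, Eb in H. rewrite Eb.
  destruct (X3_dec (g b) (g a)) as [E|_]; [congruence|]. injection H as H. now rewrite H.
Qed.

(** [images] computes the first letters of squashed images of words with a
    known prefix; [refute n] closes a case in which these first letters (or,
    after splitting the exponent [n], the first letters of a power) disagree. *)
Ltac images := cbn [map h1 h2 h3 squash drop_lead X3_dec app] in *.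

Ltac refute n := exfalso; unfold agrees in *; first
  [ match goal with H : squashed _ |- _ => solve [simpl in H; intuition congruence] end
  | solve [images; first [ congruence
                  | destruct n; rewrite ?pw_S, ?pw_0 in *; cbn [app] in *; congruence ]] ].

(** The possible continuations of a word after an occurrence of some p_n. *)
Definition after_p (x : list X4) : Prop :=
  x = [] \/ (exists y, x = x00 :: y) \/ (exists y, x = x10 :: y).

(** Third block of p: when the h3-image of x11 W leads the h1-image by
    (xr xm)^n, the word W must continue with (x10 x11)^n. *)
Lemma phase_tail : forall n W, squashed (x11 :: W) ->
  sq3 (map h3 (x11 :: W)) = pw n [xr; xm] ++ sq3 (map h1 (x11 :: W)) ->
  agrees h2 h3 (x11 :: W) ->
  exists x, W = pw n [x10; x11] ++ x /\
    agrees h1 h3 (x11 :: x) /\ agrees h2 h3 (x11 :: x) /\ after_p x.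
Proof.
  induction n as [|n IH]; intros W Hs Hlag H23.
  - exists W. split; [reflexivity|]. split; [symmetry; exact Hlag|]. split; [exact H23|].
    unfold after_p. destruct W as [|[] W]; eauto; refute n.
  - rewrite pw_S in Hlag. unfold agrees in H23.
    destruct W as [|[] W']; try refute n.
    destruct W' as [|[] W'']; try refute n.
    destruct Hs as [_ [_ Hs]].
    destruct (IH W'' Hs) as (x & -> & Hx).
    + images. congruence.
    + unfold agrees. images. congruence.
    + exists x. rewrite pw_S. auto.
Qed.

(** Middle block of p: after x10, the lags (xm xl)^k of h2 behind h3 and
    (xm xr)^j of h3 ahead of h1 force the continuation
    (x01 x10)^k x11 (x10 x11)^(k+j). *)
Lemma phase_middle : forall k j z, squashed (x10 :: z) ->
  sq3 (xm :: map h2 z) = pw k [xm; xl] ++ sq3 (xm :: map h3 z) ->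
  sq3 (xm :: map h3 z) = pw j [xm; xr] ++ xm :: sq3 (xr :: map h1 z) ->
  exists x, z = pw k [x01; x10] ++ x11 :: pw (k + j) [x10; x11] ++ x /\
    agrees h1 h3 (x11 :: x) /\ agrees h2 h3 (x11 :: x) /\ after_p x.
Proof.
  induction k as [|k IH]; intros j z Hs H23 H13.
  - rewrite pw_0 in H23. destruct z as [|[] z]; try refute j.
    destruct (phase_tail j z) as (x & -> & Hx).
    + simpl in Hs; tauto.
    + images. rewrite pw_swap in H13. cbn [app] in H13. congruence.
    + unfold agrees. images. congruence.
    + exists x. auto.
  - destruct z as [|[] z']; try refute j; try refute k.
    destruct z' as [|[] z'']; try refute j; try refute k.
    destruct Hs as [_ [_ Hs]].
    destruct (IH (S j) z'' Hs) as (x & -> & Hx).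
    + images. rewrite pw_S in H23. cbn [app] in H23. congruence.
    + images. rewrite pw_Sr, <- app_assoc. cbn [app]. congruence.
    + exists x. rewrite pw_S, <- plus_n_Sm. auto.
Qed.

(** First block of p: a prefix (x00 x01)^(k+1), with h2 lagging h3 by
    (xl xm)^k, extends to a full p_n followed by an admissible continuation. *)
Lemma phase_head : forall len t k, length t <= len ->
  squashed (x00 :: x01 :: t) -> agrees h1 h3 (x00 :: x01 :: t) ->
  sq3 (map h2 (x00 :: x01 :: t)) = pw k [xl; xm] ++ sq3 (map h3 (x00 :: x01 :: t)) ->
  exists n x, pw k [x00; x01] ++ x00 :: x01 :: t = p_word n ++ x /\
    agrees h1 h3 (x11 :: x) /\ agrees h2 h3 (x11 :: x) /\ after_p x.
Proof.
  induction len as [|len IH]; intros t k Hlen Hs H13 H23.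
  - destruct t; [refute k | simpl in Hlen; lia].
  - unfold agrees in H13.
    destruct t as [|[] t']; try refute k.
    + destruct t' as [|[] t'']; try refute k.
      destruct (IH t'' (S k)) as (n & x & E & Hx).
      * simpl in Hlen; lia.
      * destruct Hs as [_ [_ Hs]]; exact Hs.
      * unfold agrees. images. congruence.
      * images. rewrite pw_Sr, <- app_assoc. cbn [app]. congruence.
      * exists n, x. rewrite <- E, pw_Sr, <- app_assoc. auto.
    + destruct (phase_middle k 0 t') as (x & -> & Hx).
      * simpl in Hs; tauto.
      * images. rewrite pw_swap in H23. congruence.
      * images. rewrite pw_0. cbn [app]. congruence.
      * exists k, x. split; [|exact Hx].
        rewrite <- plus_n_O, p_word_eq, <- !app_assoc. simpl. now rewrite <- !app_assoc.
Qed.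

Lemma x00_cases t : squashed (x00 :: t) -> agrees h1 h3 (x00 :: t) -> agrees h2 h3 (x00 :: t) ->
  t = [] \/ (exists x, t = x11 :: x) \/
  (exists n x, x00 :: t = p_word n ++ x /\
     agrees h1 h3 (x11 :: x) /\ agrees h2 h3 (x11 :: x) /\ after_p x).
Proof.
  intros Hs H13 H23.
  destruct t as [|[] t']; [now left | refute 0 | | refute 0 | eauto].
  right; right. apply (phase_head (length t') t' 0); auto.
Qed.

Definition factors (w : list X4) (g : RGen) (w' : list X4) : Prop :=
  w = sq4 (ev g ++ w') /\ length w' < length w /\ agreeing w'.

Lemma ev_not_nil g : ev g <> [].
Proof. destruct g; discriminate. Qed.

Lemma factors_exact g w' : squashed (ev g ++ w') ->
  agrees h1 h3 w' -> agrees h2 h3 w' -> factors (ev g ++ w') g w'.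
Proof.
  intros Hs H13 H23. split; [|split].
  - symmetry. now apply squashed_squash_id.
  - rewrite length_app. pose proof (ev_not_nil g). destruct (ev g); [congruence | simpl; lia].
  - split; [exact (squashed_suffix _ _ Hs) | auto].
Qed.

Lemma leading_factor_x00 t : agreeing (x00 :: t) -> exists g w', factors (x00 :: t) g w'.
Proof.
  intros (Hs & H13 & H23).
  destruct (x00_cases t Hs H13 H23) as [-> | [(x & ->) | (n & x & E & Hx13 & Hx23 & Hafter)]].
  - exists gx00, []. exact (factors_exact gx00 [] Hs eq_refl eq_refl).
  - exists gx00, (x11 :: x). apply (factors_exact gx00); [exact Hs | |];
      (apply (agrees_drop_head _ _ x00); [reflexivity | reflexivity | discriminate | assumption]).
  - rewrite E in Hs |- *.
    destruct Hafter as [-> | [(y & ->) | (y & ->)]].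
    + exists (gp n), []. exact (factors_exact (gp n) [] Hs eq_refl eq_refl).
    + exists (gp n), (x00 :: y). apply (factors_exact (gp n)); [exact Hs | |];
        (apply (agrees_drop_head _ _ x11); [reflexivity | reflexivity | discriminate | assumption]).
    + exists (gp n), (x11 :: x10 :: y). destruct (p_last n) as [P EP].
      rewrite EP, <- app_assoc in Hs. cbn [app] in Hs. split; [|split].
      * cbn [ev]. rewrite EP, <- !app_assoc. cbn [app].
        now rewrite squash_dup, squashed_squash_id.
      * destruct (p_head n) as [T ET]. rewrite ET, length_app. simpl. lia.
      * split; [exact (squashed_suffix _ _ Hs) | auto].
Qed.

Definition sigR (g : RGen) : RGen :=
  match g with gx00 => gx11 | gx11 => gx00 | gp i => gq i | gq i => gp i end.

Lemma ev_sigR g : ev (sigR g) = map sig4 (ev g).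
Proof. destruct g; [reflexivity | reflexivity | symmetry; apply p_sig | symmetry; apply q_sig]. Qed.

Lemma factors_sig w g w' : factors w g w' -> factors (map sig4 w) (sigR g) (map sig4 w').
Proof.
  intros (E & Hlt & Hw'). split; [|split].
  - now rewrite ev_sigR, <- map_app, sq4_sig, <- E.
  - now rewrite !length_map.
  - now apply agreeing_sig.
Qed.

(** Every nonempty agreeing word has a leading generator; x01 and x10 cannot
    start it, and words starting with x11 are handled by symmetry. *)
Lemma leading_factor w : w <> [] -> agreeing w -> exists g w', factors w g w'.
Proof.
  intros Hne Hw. destruct w as [|[] t]; [congruence | now apply leading_factor_x00 | | |].
  - destruct Hw as (_ & H13 & H23). refute 0.
  - destruct Hw as (_ & H13 & H23). refute 0.
  - destruct (leading_factor_x00 (map sig4 t) (agreeing_sig (x11 :: t) Hw)) as (g & w' & F).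
    exists (sigR g), (map sig4 w').
    rewrite <- (map_sig4_invol (x11 :: t)). exact (factors_sig _ _ _ F).
Qed.

Lemma generation : forall n w, length w <= n -> w <> [] -> agreeing w ->
  exists u, u <> [] /\ sq4 (evw u) = w.
Proof.
  induction n as [|n IH]; intros w Hlen Hne Hw.
  - destruct w; [congruence | simpl in Hlen; lia].
  - destruct (leading_factor w Hne Hw) as (g & w' & E & Hlt & Hw').
    destruct w' as [|a w''].
    + exists [g]. split; [discriminate | now rewrite E].
    + destruct (IH (a :: w'')) as (u & Hu & Eu); [lia | discriminate | exact Hw' |].
      exists (g :: u). split; [discriminate|].
      change (evw (g :: u)) with (ev g ++ evw u).
      now rewrite E, <- Eu, sq4_app_squash.
Qed.

Theorem R_generated w : inR w -> exists u, u <> [] /\ eqF w (evw u).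
Proof.
  intro Hw. destruct (generation (length (sq4 w)) (sq4 w)) as (u & Hu & E).
  - reflexivity.
  - apply squash_not_nil, (proj1 Hw).
  - now apply inR_agreeing.
  - exists u. split; [exact Hu|]. apply eqF_iff. now rewrite E.
Qed.

Lemma evw_app u v : evw (u ++ v) = evw u ++ evw v.
Proof. unfold evw. now rewrite map_app, concat_app. Qed.

Theorem relations_hold u v : eqR u v -> eqF (evw u) (evw v).
Proof.
  induction 1 as [u v [l r a b Hab] | u | u v _ IH | u w v _ IH1 _ IH2].
  - rewrite !evw_app. apply cong_ctx, eqF_iff.
    destruct Hab as [| |i|i|i|i]; unfold evw; cbn [map concat ev app]; rewrite ?app_nil_r.
    + apply (squash_dup X4_dec []).
    + apply (squash_dup X4_dec []).
    + destruct (p_head i) as [T ->]. apply (squash_dup X4_dec []).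
    + destruct (p_last i) as [P ->]. rewrite <- app_assoc. apply squash_dup.
    + destruct (q_head i) as [T ->]. apply (squash_dup X4_dec []).
    + destruct (q_last i) as [P ->]. rewrite <- app_assoc. apply squash_dup.
  - apply rst_refl.
  - now apply rst_sym.
  - now apply rst_trans with (evw w).
Qed.

Definition compatible (g h : RGen) : Prop :=
  match g, h with
  | gx00, gx00 | gx00, gp _ | gx11, gx11 | gx11, gq _ | gp _, gx11 | gq _, gx00 => False
  | _, _ => True
  end.

Fixpoint compatible_chain (u : list RGen) : Prop :=
  match u with
  | g :: ((h :: _) as u') => compatible g h /\ compatible_chain u'
  | _ => True
  end.

Lemma reduced_chain u : reduced u -> compatible_chain u.
Proof.
  induction u as [|g u IH]; intros [Hne Hf]; [exact I|].
  destruct u as [|h u]; [exact I|]. split.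
  - destruct (classic (compatible g h)) as [|Hgh]; [assumption|]. exfalso.
    apply Hf. exists [], [g; h], u. split; [reflexivity|].
    destruct g, h; cbn in Hgh; try tauto; eexists; constructor.
  - apply IH. split; [discriminate|]. intros (l & m & r & E & F). apply Hf.
    exists (g :: l), m, r. rewrite E. now split.
Qed.

Lemma compatible_chain_tail g u : compatible_chain (g :: u) -> compatible_chain u.
Proof. destruct u; simpl; tauto. Qed.

Definition last_letter (g : RGen) : X4 :=
  match g with gx00 => x00 | gx11 => x11 | gp _ => x11 | gq _ => x00 end.

Lemma ev_last g : exists P, ev g = P ++ [last_letter g].
Proof.
  destruct g as [| |i|i]; [exists []; reflexivity | exists []; reflexivity | apply p_last | apply q_last].
Qed.

Lemma squashed_ev g : squashed (ev g).
Proof. destruct g; [exact I | exact I | apply squashed_p | apply squashed_q]. Qed.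

(** The squashed image of a product: the first generator's word is kept intact
    and overlaps the rest in at most its last letter. *)
Lemma sq4_evw_cons g u :
  sq4 (evw (g :: u)) = ev g ++ drop_lead X4_dec (last_letter g) (sq4 (evw u)).
Proof.
  destruct (ev_last g) as [P E]. change (evw (g :: u)) with (ev g ++ evw u).
  rewrite E, <- app_assoc. cbn [app]. rewrite squash_app_cons, squashed_squash_id; [reflexivity|].
  rewrite <- E. apply squashed_ev.
Qed.

Fixpoint pair_run (a b : X4) (l : list X4) : nat :=
  match l with
  | x :: ((y :: l') as l'') => if X4_dec x a then if X4_dec y b then S (pair_run a b l') else 0 else 0
  | _ => 0
  end.

Lemma pair_run_pw a b c n X : c <> a -> pair_run a b (pw n [a; b] ++ c :: X) = n.
Proof.
  intro Hca. induction n as [|n IH].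
  - rewrite pw_0. destruct X; cbn; [reflexivity|]. now destruct (X4_dec c a).
  - rewrite pw_S. cbn. destruct (X4_dec a a); [|congruence].
    destruct (X4_dec b b); [|congruence]. now rewrite IH.
Qed.

(** Decoding the first generator from a squashed image: x00 x01 opens some
    p_n, whose index is the number of leading x00 x01 blocks; dually for q_n. *)
Definition first_generator (W : list X4) : RGen :=
  match W with
  | x00 :: x01 :: _ => gp (pred (pair_run x00 x01 W))
  | x00 :: _ => gx00
  | x11 :: x10 :: _ => gq (pred (pair_run x11 x10 W))
  | _ => gx11
  end.

Lemma first_generator_p n X : first_generator (pw (S n) [x00; x01] ++ x10 :: X) = gp n.
Proof.
  assert (H : pair_run x00 x01 (pw (S n) [x00; x01] ++ x10 :: X) = S n)
    by (apply pair_run_pw; discriminate).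
  rewrite pw_S in *. cbn [app] in *. unfold first_generator. now rewrite H.
Qed.

Lemma first_generator_q n X : first_generator (pw (S n) [x11; x10] ++ x01 :: X) = gq n.
Proof.
  assert (H : pair_run x11 x10 (pw (S n) [x11; x10] ++ x01 :: X) = S n)
    by (apply pair_run_pw; discriminate).
  rewrite pw_S in *. cbn [app] in *. unfold first_generator. now rewrite H.
Qed.

Lemma p_form n : exists T, p_word n = pw (S n) [x00; x01] ++ x10 :: T.
Proof.
  unfold p_word. destruct n; rewrite ?pw_0, ?(pw_S _ [x10; x01]), ?(pw_S _ [x10; x11]); cbn [app];
    eexists; reflexivity.
Qed.

Lemma q_form n : exists T, q_word n = pw (S n) [x11; x10] ++ x01 :: T.
Proof.
  destruct (p_form n) as [T E]. exists (map sig4 T).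
  now rewrite <- p_sig, E, map_app, map_pw.
Qed.

Ltac expose_heads := repeat match goal with
  | |- context [ev (gp ?j)] =>
      let T := fresh "T" in let E := fresh "E" in
      destruct (p_head j) as [T E]; change (ev (gp j)) with (p_word j); rewrite E
  | |- context [ev (gq ?j)] =>
      let T := fresh "T" in let E := fresh "E" in
      destruct (q_head j) as [T E]; change (ev (gq j)) with (q_word j); rewrite E
  end.

Lemma first_generator_correct g u :
  compatible_chain (g :: u) -> first_generator (sq4 (evw (g :: u))) = g.
Proof.
  intro Hc. rewrite sq4_evw_cons. destruct g as [| |i|i].
  - destruct u as [|h u]; [reflexivity|]. destruct Hc as [Hgh _].
    rewrite sq4_evw_cons. destruct h; cbn in Hgh; try contradiction; expose_heads; reflexivity.
  - destruct u as [|h u]; [reflexivity|]. destruct Hc as [Hgh _].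
    rewrite sq4_evw_cons. destruct h; cbn in Hgh; try contradiction; expose_heads; reflexivity.
  - cbn [ev]. destruct (p_form i) as [T ->]. rewrite <- app_assoc. apply first_generator_p.
  - cbn [ev]. destruct (q_form i) as [T ->]. rewrite <- app_assoc. apply first_generator_q.
Qed.

(** Words starting with x00 or x11, and continuing with x01 or x10 when they
    start with [z]: for such words removing a leading [z] is invertible. *)
Definition separated (z : X4) (l : list X4) : Prop :=
  match l with
  | [] => True
  | y :: Y => (y = x00 \/ y = x11) /\
              (y = z -> match Y with y2 :: _ => y2 = x01 \/ y2 = x10 | [] => False end)
  end.

Lemma drop_lead_separated_inj z l l' : separated z l -> separated z l' ->
  drop_lead X4_dec z l = drop_lead X4_dec z l' -> l = l'.
Proof.
  intros H H' E.
  destruct l as [|y Y], l' as [|y' Y']; cbn [drop_lead] in E; try reflexivity.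
  - destruct H' as [_ H']. destruct (X4_dec y' z) as [e|]; [|discriminate]. subst Y'.
    exact (False_ind _ (H' e)).
  - destruct H as [_ H]. destruct (X4_dec y z) as [e|]; [|discriminate]. subst Y.
    exact (False_ind _ (H e)).
  - destruct H as [Hy HY], H' as [Hy' HY'].
    destruct (X4_dec y z) as [e|ne], (X4_dec y' z) as [e'|ne'].
    + congruence.
    + subst Y. destruct (HY e), Hy'; congruence.
    + subst Y'. destruct (HY' e'), Hy; congruence.
    + exact E.
Qed.

Lemma separated_tail g u : compatible_chain (g :: u) -> separated (last_letter g) (sq4 (evw u)).
Proof.
  destruct u as [|h u]; [intros _; exact I|]. intros [Hgh _]. rewrite sq4_evw_cons.
  destruct g, h; cbn [compatible] in Hgh; try contradiction; expose_heads;
    cbn [ev separated app last_letter]; split; auto; intro Hz; try discriminate Hz; auto.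
Qed.

Lemma normal_form_inj : forall u v, compatible_chain u -> compatible_chain v ->
  sq4 (evw u) = sq4 (evw v) -> u = v.
Proof.
  induction u as [|g u IH]; intros [|h v] Hu Hv E; try reflexivity.
  - rewrite sq4_evw_cons in E. destruct (ev h) eqn:Eh; [now destruct (ev_not_nil h) | discriminate].
  - rewrite sq4_evw_cons in E. destruct (ev g) eqn:Eg; [now destruct (ev_not_nil g) | discriminate].
  - assert (g = h) as <-.
    { now rewrite <- (first_generator_correct g u Hu), <- (first_generator_correct h v Hv), E. }
    f_equal. apply IH; [exact (compatible_chain_tail _ _ Hu) | exact (compatible_chain_tail _ _ Hv)|].
    rewrite !sq4_evw_cons in E. apply app_inv_head in E.
    exact (drop_lead_separated_inj _ _ _ (separated_tail g u Hu) (separated_tail g v Hv) E).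
Qed.

Lemma reduced_faithful v1 v2 : reduced v1 -> reduced v2 -> eqF (evw v1) (evw v2) -> v1 = v2.
Proof.
  intros R1 R2 E. apply normal_form_inj; [now apply reduced_chain | now apply reduced_chain |].
  now apply eqF_iff.
Qed.

Lemma normalization : forall n u, length u <= n -> u <> [] -> exists v, reduced v /\ eqR u v.
Proof.
  induction n as [|n IH]; intros u Hlen Hne; [destruct u; [congruence | simpl in Hlen; lia]|].
  destruct (classic (exists l m r, u = l ++ m ++ r /\ forbidden m)) as [(l & m & r & -> & b & Hb)|N].
  - destruct (IH (l ++ b ++ r)) as (v & Rv & Ev).
    + rewrite !length_app in *. destruct Hb; simpl in *; lia.
    + destruct Hb; destruct l; discriminate.
    + exists v. split; [exact Rv|]. apply rst_trans with (l ++ b ++ r); [|exact Ev].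
      apply rst_step. now constructor.
  - exists u. split; [now split | apply rst_refl].
Qed.

Lemma presentation u v : u <> [] -> v <> [] -> (eqF (evw u) (evw v) <-> eqR u v).
Proof.
  intros Hu Hv. split; [|apply relations_hold]. intro E.
  destruct (normalization (length u) u) as (nu & Rnu & Enu); [reflexivity | exact Hu|].
  destruct (normalization (length v) v) as (nv & Rnv & Env); [reflexivity | exact Hv|].
  assert (nu = nv) as <-.
  { apply reduced_faithful; [exact Rnu | exact Rnv|].
    apply rst_trans with (evw u); [apply rst_sym, relations_hold, Enu|].
    apply rst_trans with (evw v); [exact E | apply relations_hold, Env]. }
  apply rst_trans with nu; [exact Enu | apply rst_sym, Env].
Qed.

Theorem lemma11p4 :
  (* the generators lie in |R| *)
  (forall g : RGen, inR (ev g)) /\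
  (* they generate |R| *)
  (forall w : list X4, inR w -> exists u : list RGen, u <> [] /\ eqF w (evw u)) /\
  (* presentation: the defining relations give exactly the equalities in F *)
  (forall u v : list RGen, u <> [] -> v <> [] -> (eqF (evw u) (evw v) <-> eqR u v)) /\
  (* normal form: every element has exactly one reduced representative *)
  (forall u : list RGen, u <> [] -> exists v, reduced v /\ eqR u v) /\
  (forall v1 v2 : list RGen, reduced v1 -> reduced v2 -> eqR v1 v2 -> v1 = v2).
Proof.
  split; [exact generators_in_R|].
  split; [exact R_generated|].
  split; [exact presentation|].
  split.
  - intros u Hu. exact (normalization (length u) u (le_n _) Hu).
  - intros v1 v2 R1 R2 E. apply reduced_faithful; [exact R1 | exact R2 | apply relations_hold, E].
Qed.
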